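(* Let $\mathcal{I}$ be an instance of vertex cover and let $\mathcal{T}_S(\mathcal{I})$ be a branch-and-bound tree generated by strong-branching (product score). Let $N$ be any internal node of $\mathcal{T}_S(\mathcal{I})$ and let $N'$ be a child of $N$ resulting from branching on $x_v$ where $v\notin I(\mathcal{I},N)$. Then $I(\mathcal{I},N)\subset I(\mathcal{I},N')$.
   Context: Vertex cover IP for a graph $G=(V,E)$: minimize $\sum_v x_v$ subject to $x_u+x_v\ge1$ ($uv\in E$), $x\in\{0,1\}^V$; LP relaxation uses $x\in[0,1]^V$. In a branch-and-bound tree each node $N$ is the LP relaxation plus constraints $x_j=0$ or $x_j=1$ for variables fixed on the path from the root, and branching on $x_v$ at $N$ produces the children obtained by adding $x_v=0$ and $x_v=1$. Strong branching with product score: at node $N$ with LP value $z$ and returned optimal solution $\hat x$, for each $j$ with $\hat x_j$ fractional compute the children's optimal LP values $z^0_j,z^1_j$ ($+\infty$ if infeasible), $\Delta^-_j=z^0_j-z$, $\Delta^+_j=z^1_j-z$, and branch on a maximizer of $\Delta^+_j\Delta^-_j$ (convention $0\cdot\infty=0$). $I(\mathcal{I},N)$ denotes the union, over all optimal solutions $x$ of the LP at node $N$, of $\{j: x_j\in\{0,1\}\}$. *)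

From HB Require Import structures.
From mathcomp Require Import all_boot all_order all_algebra.
From mathcomp Require Import boolp classical_sets reals constructive_ereal ereal.
Set Implicit Arguments. Unset Strict Implicit. Unset Printing Implicit Defensive.
Import Order.TTheory GRing.Theory Num.Theory.
Local Open Scope ring_scope.
Local Open Scope classical_set_scope.

(* A vertex cover instance: a finite simple graph given by a symmetric,
   irreflexive edge relation [e] on a finite vertex type [V].
   A branch-and-bound node is a partial assignment [fx] : fx v = Some b means
   the constraint x_v = b has been added; None means x_v is free. *)
Definition node (V : finType) := {ffun V -> option bool}.

Definition root_node (V : finType) : node V := [ffun _ => None].

Definition set_fix (V : finType) (fx : node V) (j : V) (b : bool) : node V :=
  [ffun k => if k == j then Some b else fx k].

Section LP.
Variables (R : realType) (V : finType) (e : rel V).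

Definition lp_feasible (fx : node V) (x : V -> R) : Prop :=
  (forall u v, e u v -> 1 <= x u + x v) /\
  (forall v, 0 <= x v <= 1) /\
  (forall v b, fx v = Some b -> x v = (b%:R : R)).

Definition lp_optimal (fx : node V) (x : V -> R) : Prop :=
  lp_feasible fx x /\
  forall y, lp_feasible fx y -> \sum_v x v <= \sum_v y v.

(* optimal LP value; +oo when infeasible (infimum of the empty set) *)
Definition lp_value (fx : node V) : \bar R :=
  ereal_inf [set (\sum_v x v)%:E | x in lp_feasible fx].

Definition fractional (r : R) : Prop := 0 < r < 1.

(* product score Delta^+_j * Delta^-_j (mathcomp's ereal product has 0 * oo = 0) *)
Definition product_score (fx : node V) (j : V) : \bar R :=
  ((lp_value (set_fix fx j true) - lp_value fx) *
   (lp_value (set_fix fx j false) - lp_value fx))%E.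

Definition sb_branches (fx : node V) (j : V) : Prop :=
  exists xhat, lp_optimal fx xhat /\ fractional (xhat j) /\
    forall k, fractional (xhat k) -> (product_score fx k <= product_score fx j)%E.

Inductive sb_node : node V -> Prop :=
| sb_root : sb_node (root_node V)
| sb_child fx j b : sb_node fx -> sb_branches fx j -> sb_node (set_fix fx j b).

(* I(I,N): variables integral in some optimal LP solution at the node *)
Definition int_set (fx : node V) : set V :=
  [set j | exists x, lp_optimal fx x /\ (x j = 0 \/ x j = 1)].

End LP.

From HB Require Import structures.
From mathcomp Require Import all_boot all_order all_algebra.
From mathcomp Require Import boolp classical_sets reals constructive_ereal ereal.
From mathcomp Require Import ring lra.
Set Implicit Arguments. Unset Strict Implicit. Unset Printing Implicit Defensive.
Import Order.TTheory GRing.Theory Num.Theory.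
Local Open Scope classical_set_scope.
Local Open Scope ring_scope.

(* Stretching the fractional coordinates of a feasible point about 1/2 keeps it
   feasible and changes its cost linearly in the stretch factor, so an optimal
   point may have its fractional coordinates moved to 1/2; as a consequence a
   feasible LP attains its optimum among the finitely many half-integral points.
   Now take half-integral optima X at N, with X_j integral and X_v = 1/2 (as v is
   not in I(N)), and Y at the child, with Y_j = 1/2 (otherwise Y already works).
   Write r = (upper r + lower r) / 2 with upper r = min(2r, 1) and
   lower r = max(2r - 1, 0); taking the coordinatewise min of the upper parts and
   max of the lower parts gives a point feasible for the child, the reverse
   choice a point feasible for N, and their costs add up to those of X and Y.
   Hence the former is optimal for the child, and it agrees with X at j. *)

Section UnitInterval.
Variable R : realFieldType.
Implicit Types (r t : R) (c : bool).

Lemma unit_nonfrac_eq01 r : 0 <= r <= 1 -> ~~ (0 < r < 1) -> r = 0 \/ r = 1.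
Proof.
move=> /andP[r_ge0 r_le1]; rewrite negb_and -!leNgt => /orP[|] ?.
  by left; apply/eqP; rewrite eq_le; apply/andP.
by right; apply/eqP; rewrite eq_le; apply/andP.
Qed.

Lemma bool_nonfrac c : ~~ (0 < (c%:R : R) < 1).
Proof. by case: c; rewrite ?ltxx ?andbF. Qed.

Definition upper r := Num.min (2 * r) 1.
Definition lower r := Num.max (2 * r - 1) 0.

Lemma upper_add_lower r : upper r + lower r = 2 * r.
Proof.
by rewrite /upper /lower; case: (lerP (2 * r) 1) => ?; case: (lerP (2 * r - 1) 0) => ?; lra.
Qed.

Lemma upper_add_lower_ge1 r t : 1 <= r + t -> 1 <= upper r + lower t.
Proof.
by rewrite /upper /lower => ?; case: (lerP (2 * r) 1) => ?; case: (lerP (2 * t - 1) 0) => ?; lra.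
Qed.

Lemma upper_unit r : 0 <= r -> 0 <= upper r <= 1.
Proof. by rewrite /upper; case: (lerP (2 * r) 1) => ? ?; apply/andP; split; lra. Qed.

Lemma lower_unit r : r <= 1 -> 0 <= lower r <= 1.
Proof. by rewrite /lower; case: (lerP (2 * r - 1) 0) => ? ?; apply/andP; split; lra. Qed.

Lemma upper_bool c : upper c%:R = c%:R.
Proof. by rewrite /upper; case: c => /=; case: lerP => ?; lra. Qed.

Lemma lower_bool c : lower c%:R = c%:R.
Proof. by rewrite /lower; case: c => /=; case: lerP => ?; lra. Qed.

Lemma upper_half : upper (1/2) = 1.
Proof. by rewrite /upper; case: (lerP (2 * _) 1) => ?; lra. Qed.

Lemma lower_half : lower (1/2) = 0.
Proof. by rewrite /lower; case: (lerP (2 * _ - 1) 0) => ?; lra. Qed.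

Lemma min_add_max_ge (a a' b b' : R) :
  Num.min (a + b) (a' + b') <= Num.min a a' + Num.max b b'.
Proof. by case: (lerP a a') => ?; case: (lerP b b') => ?; case: (lerP (a + b)) => ?; lra. Qed.

Lemma max_add_min_ge (a a' b b' : R) :
  Num.min (a + b) (a' + b') <= Num.max a a' + Num.min b b'.
Proof. by case: (lerP a a') => ?; case: (lerP b b') => ?; case: (lerP (a + b)) => ?; lra. Qed.

End UnitInterval.

Section HalfIntegrality.
Variables (R : realType) (V : finType) (e : rel V).
Implicit Types (x y z : V -> R) (fx : node V) (s : R).

Definition scale_frac s x u := if 0 < x u < 1 then 1/2 + s * (x u - 1/2) else x u.

Definition frac_excess x := \sum_u (if 0 < x u < 1 then x u - 1/2 else 0).

Definition frac_count x := #|[pred u | 0 < x u < 1]|.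

Lemma scale_frac0 x u : 0 < x u < 1 -> scale_frac 0 x u = 1/2.
Proof. by rewrite /scale_frac => ->; rewrite mul0r addr0. Qed.

Lemma scale_frac_nonfrac s x u : ~~ (0 < x u < 1) -> scale_frac s x u = x u.
Proof. by rewrite /scale_frac => /negbTE ->. Qed.

Lemma sum_scale_frac s x :
  \sum_u scale_frac s x u = \sum_u x u + (s - 1) * frac_excess x.
Proof.
rewrite mulr_sumr -big_split; apply: eq_bigr => u _ /=.
by rewrite /scale_frac; case: ifP => _; [ring | rewrite mulr0 addr0].
Qed.

Lemma scale_frac_feasible fx x s : lp_feasible e fx x -> 0 <= s ->
  (forall u, 0 <= scale_frac s x u <= 1) -> lp_feasible e fx (scale_frac s x).
Proof.
move=> [ex [bx fixx]] s_ge0 bs; split; last first.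
  by split=> // u c fuc; rewrite scale_frac_nonfrac (fixx _ _ fuc) ?bool_nonfrac.
move=> p q epq.
have mixed r t : 0 < x r < 1 -> ~~ (0 < x t < 1) -> 1 <= x r + x t ->
    1 <= scale_frac s x r + scale_frac s x t.
  move=> /andP[? ?] nt h; rewrite (scale_frac_nonfrac _ nt).
  have [xt0|->] := unit_nonfrac_eq01 (bx t) nt; first lra.
  by have /andP[? _] := bs r; lra.
have := ex _ _ epq.
case: (boolP (0 < x p < 1)) => fp; case: (boolP (0 < x q < 1)) => fq h.
- have : 0 <= s * (x p + x q - 1) by apply: mulr_ge0; lra.
  by rewrite /scale_frac fp fq; lra.
- exact: mixed.
- by rewrite addrC; apply: mixed; rewrite // addrC.
- by rewrite !scale_frac_nonfrac.
Qed.

Lemma scale_frac0_feasible fx x : lp_feasible e fx x -> lp_feasible e fx (scale_frac 0 x).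
Proof.
move=> fx_x; apply: scale_frac_feasible => // u.
by rewrite /scale_frac; case: ifP => _; [rewrite mul0r addr0; lra | apply: fx_x.2.1].
Qed.

Lemma stretch_frac fx x : lp_feasible e fx x ->
  (exists u, (0 < x u < 1) && (x u != 1/2)) ->
  exists s, [/\ 1 < s, lp_feasible e fx (scale_frac s x) &
    exists u, (0 < x u < 1) && ~~ (0 < scale_frac s x u < 1)].
Proof.
move=> fx_x [u1 /andP[fu1 nu1]].
pose dev u := if 0 < x u < 1 then `|x u - 1/2| else 0.
have [u0 _ dev_max] := @arg_maxP _ R V u1 xpredT dev isT.
set D := dev u0 in dev_max.
have D_gt0 : 0 < D.
  by apply: lt_le_trans (dev_max u1 isT); rewrite /dev fu1 normr_gt0 subr_eq0.
have fu0 : 0 < x u0 < 1 by move: D_gt0; rewrite /D /dev; case: ifP; rewrite ?ltxx.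
have D_def : D = `|x u0 - 1/2| by rewrite /D /dev fu0.
have dev_le u : 0 < x u < 1 -> - D <= x u - 1/2 <= D.
  by move=> fu; rewrite -ler_norml; have := dev_max u isT; rewrite /dev fu.
pose s := (2 * D)^-1.
have sD : s * D = 1/2 by rewrite /s invfM -mulrA mulVf ?gt_eqF // mulr1 div1r.
have s_gt0 : 0 < s by rewrite invr_gt0 mulr_gt0.
exists s; split.
- have : D < 1/2 by rewrite D_def ltr_norml; move: fu0 => /andP[]; lra.
  by nra.
- apply: scale_frac_feasible => [//||u]; first exact: ltW.
  rewrite /scale_frac; case: ifP => [fu|_]; last exact: fx_x.2.1.
  have /andP[? ?] := dev_le u fu.
  have : 0 <= s * (D - (x u - 1/2)) by apply: mulr_ge0; [exact: ltW | lra].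
  have : 0 <= s * (D + (x u - 1/2)) by apply: mulr_ge0; [exact: ltW | lra].
  by move=> ? ?; apply/andP; split; nra.
- exists u0; rewrite fu0 /scale_frac fu0 /=.
  have [pos|neg] := lerP 0 (x u0 - 1/2).
    by rewrite -(ger0_norm pos) -D_def sD; lra.
  by rewrite -(opprK (x u0 - 1/2)) -(ltr0_norm neg) -D_def mulrN sD; lra.
Qed.

Lemma frac_excess_lt0_off_half x : frac_excess x < 0 ->
  exists u, (0 < x u < 1) && (x u != 1/2).
Proof.
move=> neg; apply/existsP; apply: contraTT neg; rewrite negb_exists => /forallP off.
rewrite -leNgt /frac_excess big1 // => u _.
by case: ifP => fu //; move: (off u); rewrite fu negbK => /eqP ->; rewrite subrr.
Qed.

Lemma optimal_frac_excess_ge0 fx x : lp_optimal e fx x -> 0 <= frac_excess x.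
Proof.
move=> [fx_x x_min]; rewrite leNgt; apply/negP => neg.
have [s [s_gt1 fx_s _]] := stretch_frac fx_x (frac_excess_lt0_off_half neg).
have : (s - 1) * frac_excess x < 0 by rewrite pmulr_rlt0 // subr_gt0.
by have := x_min _ fx_s; rewrite sum_scale_frac; lra.
Qed.

Lemma optimal_scale_frac0 fx x : lp_optimal e fx x -> lp_optimal e fx (scale_frac 0 x).
Proof.
move=> x_opt; split=> [|y fx_y]; first exact: scale_frac0_feasible x_opt.1.
have := optimal_frac_excess_ge0 x_opt; have := x_opt.2 _ fx_y.
by rewrite sum_scale_frac; lra.
Qed.

Definition halves (g : {ffun V -> 'I_3}) u : R := (g u)%:R / 2.

Lemma scale_frac0_halves x : (forall u, 0 <= x u <= 1) ->
  exists g, halves g = scale_frac 0 x.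
Proof.
move=> bx.
exists [ffun u => inord (if 0 < x u < 1 then 1 else if x u == 0 then 0 else 2)].
apply: funext => u; rewrite /halves ffunE.
case: ifP => fu; first by rewrite inordK // scale_frac0 ?fu.
rewrite scale_frac_nonfrac ?fu //.
by case: (unit_nonfrac_eq01 (bx u) (negbT fu)) => ->;
  rewrite ?eqxx ?oner_eq0 inordK // ?mul0r ?divff ?pnatr_eq0.
Qed.

Lemma feasible_halves_le fx z : lp_feasible e fx z ->
  exists g, lp_feasible e fx (halves g) /\ \sum_u halves g u <= \sum_u z u.
Proof.
have [n] := ubnP (frac_count z); elim: n z => // n IH z /ltnSE count_z fx_z.
have [ge0|neg] := lerP 0 (frac_excess z).
  have [g g_def] := scale_frac0_halves fx_z.2.1; exists g; rewrite g_def.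
  by split; [exact: scale_frac0_feasible | rewrite sum_scale_frac; lra].
have [s [s_gt1 fx_s [u0 /andP[fu0 nfu0]]]] := stretch_frac fx_z (frac_excess_lt0_off_half neg).
have [|g [fx_g le_g]] := IH (scale_frac s z) _ fx_s.
  apply: leq_trans count_z; apply: proper_card; apply/properP; split.
    by apply/fintype.subsetP => u; rewrite !inE; apply: contraTT => nfu; rewrite scale_frac_nonfrac.
  by exists u0; rewrite inE.
exists g; split=> //; apply: (le_trans le_g).
have : (s - 1) * frac_excess z < 0 by rewrite pmulr_rlt0 // subr_gt0.
by rewrite sum_scale_frac; lra.
Qed.

Lemma lp_optimal_exists fx z : lp_feasible e fx z -> exists x, lp_optimal e fx x.
Proof.
move=> fx_z; have [g0 [fx_g0 _]] := feasible_halves_le fx_z.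
pose P : pred {ffun V -> 'I_3} := fun g => `[< lp_feasible e fx (halves g) >].
have [g P_g g_min] := @arg_minP _ R _ g0 P (fun g => \sum_u halves g u) (asboolT fx_g0).
exists (halves g); split=> [|y fx_y]; first exact/asboolP.
have [h [fx_h le_h]] := feasible_halves_le fx_y.
exact: le_trans (g_min h (asboolT fx_h)) le_h.
Qed.

End HalfIntegrality.

Section Exchange.
Variables (R : realType) (V : finType) (e : rel V).
Implicit Types (X Y : V -> R) (fx : node V).

Definition squeeze X Y u :=
  (Num.min (upper (X u)) (upper (Y u)) + Num.max (lower (X u)) (lower (Y u))) / 2.
Definition spread X Y u :=
  (Num.max (upper (X u)) (upper (Y u)) + Num.min (lower (X u)) (lower (Y u))) / 2.

Lemma squeezeC X Y : squeeze X Y = squeeze Y X.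
Proof. by apply: funext => u; rewrite /squeeze minC maxC. Qed.

Lemma squeeze_add_spread X Y u : squeeze X Y u + spread X Y u = X u + Y u.
Proof.
have := addr_min_max (upper (X u)) (upper (Y u)).
have := addr_min_max (lower (X u)) (lower (Y u)).
have := upper_add_lower (X u); have := upper_add_lower (Y u).
by rewrite /squeeze /spread; lra.
Qed.

Lemma squeeze_bool X Y u (c : bool) :
  X u = c%:R -> Y u = c%:R \/ Y u = 1/2 -> squeeze X Y u = c%:R.
Proof.
rewrite /squeeze => -> [] ->; rewrite ?upper_half ?lower_half !upper_bool !lower_bool.
  by rewrite minxx maxxx; lra.
by case: c => /=; case: lerP => ?; case: lerP => ?; lra.
Qed.

Lemma spread_bool X Y u (c : bool) :
  X u = c%:R -> Y u = c%:R -> spread X Y u = c%:R.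
Proof. by rewrite /spread => -> ->; rewrite minxx maxxx upper_bool lower_bool; lra. Qed.

Lemma squeeze_feasible fx X Y :
  lp_feasible e fx X -> lp_feasible e fx Y -> lp_feasible e fx (squeeze X Y).
Proof.
move=> [eX [bX fX]] [eY [bY fY]]; split; [|split].
- move=> p q epq.
  have cross r t : 1 <= X r + X t -> 1 <= Y r + Y t ->
      1 <= Num.min (upper (X r)) (upper (Y r)) + Num.max (lower (X t)) (lower (Y t)).
    move=> hX hY; apply: le_trans (min_add_max_ge _ _ _ _).
    by rewrite le_min !upper_add_lower_ge1.
  have := cross p q (eX _ _ epq) (eY _ _ epq).
  have := cross q p; rewrite addrC (addrC (Y q)) => /(_ (eX _ _ epq) (eY _ _ epq)).
  by rewrite /squeeze; lra.
- move=> u; have /andP[X0 X1] := bX u; have /andP[Y0 Y1] := bY u.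
  have /andP[? ?] := upper_unit X0; have /andP[? ?] := upper_unit Y0.
  have /andP[? ?] := lower_unit X1; have /andP[? ?] := lower_unit Y1.
  rewrite /squeeze; case: (lerP (upper (X u)) (upper (Y u))) => ?;
    by case: (lerP (lower (X u)) (lower (Y u))) => ?; apply/andP; split; lra.
- by move=> u c fuc; apply: squeeze_bool; [apply: fX | left; apply: fY].
Qed.

Lemma spread_feasible fx X Y :
  lp_feasible e fx X -> lp_feasible e fx Y -> lp_feasible e fx (spread X Y).
Proof.
move=> [eX [bX fX]] [eY [bY fY]]; split; [|split].
- move=> p q epq.
  have cross r t : 1 <= X r + X t -> 1 <= Y r + Y t ->
      1 <= Num.max (upper (X r)) (upper (Y r)) + Num.min (lower (X t)) (lower (Y t)).
    move=> hX hY; apply: le_trans (max_add_min_ge _ _ _ _).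
    by rewrite le_min !upper_add_lower_ge1.
  have := cross p q (eX _ _ epq) (eY _ _ epq).
  have := cross q p; rewrite addrC (addrC (Y q)) => /(_ (eX _ _ epq) (eY _ _ epq)).
  by rewrite /spread; lra.
- move=> u; have /andP[X0 X1] := bX u; have /andP[Y0 Y1] := bY u.
  have /andP[? ?] := upper_unit X0; have /andP[? ?] := upper_unit Y0.
  have /andP[? ?] := lower_unit X1; have /andP[? ?] := lower_unit Y1.
  rewrite /spread; case: (lerP (upper (X u)) (upper (Y u))) => ?;
    by case: (lerP (lower (X u)) (lower (Y u))) => ?; apply/andP; split; lra.
- by move=> u c fuc; apply: spread_bool; [apply: fX | apply: fY].
Qed.

End Exchange.

Section Branching.
Variables (R : realType) (V : finType) (e : rel V).
Implicit Types (x y X Y : V -> R) (fx : node V).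

Lemma feasible_frac_free fx x v : lp_feasible e fx x -> 0 < x v < 1 -> fx v = None.
Proof.
move=> [_ [_ fixx]]; case fv: (fx v) => [c|] // xv.
by move: xv; rewrite (fixx _ _ fv) (negbTE (bool_nonfrac _ _)).
Qed.

Lemma lp_feasible_set_fix fx v b y : fx v = None ->
  lp_feasible e (set_fix fx v b) y <-> lp_feasible e fx y /\ y v = b%:R.
Proof.
move=> fv; rewrite /lp_feasible; split.
  move=> [ey [boxy fixy]]; split; last by apply: fixy; rewrite ffunE eqxx.
  do 2!split=> //; move=> u c fuc; apply: fixy; rewrite ffunE.
  by case: eqP fuc => // ->; rewrite fv.
move=> [[ey [boxy fixy]] yv]; do 2!split=> //.
by move=> u c; rewrite ffunE; case: eqP => [-> [<-]|_ /fixy].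
Qed.

Lemma set_fix_round_up_feasible fx x v b : irreflexive e ->
  lp_feasible e fx x -> 0 < x v < 1 ->
  lp_feasible e (set_fix fx v b)
    (fun u => if u == v then b%:R else (x u != 0)%:R : R).
Proof.
move=> e_irr fx_x xv; have /andP[xv0 xv1] := xv.
apply/(lp_feasible_set_fix _ _ (feasible_frac_free fx_x xv)); rewrite eqxx.
have [ex [bx fixx]] := fx_x; split=> //.
have b01 : 0 <= (b%:R : R) <= 1 by case: b; rewrite ?ler01 ?lexx.
have round_ge u : x u <= (x u != 0)%:R.
  by have /andP[? ?] := bx u; case: eqP => [->|].
have round_nbr u t : x u < 1 -> 1 <= x u + x t -> (x t != 0)%:R = 1 :> R.
  by move=> ? ?; case: eqP => // xt0; lra.
split; [|split].
- move=> p q epq; have := ex _ _ epq; case/andP: b01 => ? ?.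
  case: (eqVneq p v) => [pv|_]; case: (eqVneq q v) => [qv|_].
  + by move: epq; rewrite pv qv e_irr.
  + by rewrite pv => h; rewrite (round_nbr v q) //; lra.
  + by rewrite qv addrC => h; rewrite (round_nbr v p) //; lra.
  + by have := round_ge p; have := round_ge q; lra.
- by move=> u; case: eqP => // _; case: eqP; rewrite ?lexx ?ler01.
- move=> u c fuc; rewrite (fixx _ _ fuc); case: eqP => [uv|_].
    by move: fuc; rewrite uv (feasible_frac_free fx_x xv).
  by case: c {fuc}; rewrite ?oner_eq0 ?eqxx.
Qed.

Lemma squeeze_optimal fx v b X Y : fx v = None ->
  lp_optimal e fx X -> lp_optimal e (set_fix fx v b) Y -> X v = 1/2 ->
  lp_optimal e (set_fix fx v b) (squeeze X Y).
Proof.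
move=> fv [fx_X X_min] [fy_Y Y_min] Xv.
have [fx_Y Yv] := (lp_feasible_set_fix _ _ fv).1 fy_Y.
split=> [|y fy_y].
  apply/(lp_feasible_set_fix _ _ fv); split; first exact: squeeze_feasible.
  by rewrite squeezeC; apply: squeeze_bool; [|right].
have sum_eq : \sum_u squeeze X Y u + \sum_u spread X Y u = \sum_u X u + \sum_u Y u.
  by rewrite -!big_split; apply: eq_bigr => u _; apply: squeeze_add_spread.
by have := X_min _ (spread_feasible fx_X fx_Y); have := Y_min _ fy_y; lra.
Qed.

Lemma not_int_set_frac fx v x :
  ~ int_set R e fx v -> lp_optimal e fx x -> 0 < x v < 1.
Proof.
move=> nIv x_opt; apply: contra_notT nIv => /(unit_nonfrac_eq01 (x_opt.1.2.1 v)) xv.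
by exists x.
Qed.

End Branching.

Theorem theorem2p3 (R : realType) (V : finType) (e : rel V)
  (e_sym : symmetric e) (e_irr : irreflexive e)
  (N : node V) (v : V) (b : bool) :
  sb_node R e N ->
  sb_branches R e N v ->
  ~ int_set R e N v ->
  int_set R e N `<=` int_set R e (set_fix N v b).
Proof.
move=> _ _ nIv j [x [x_opt xj]].
have xv := not_int_set_frac nIv x_opt.
have Nv := feasible_frac_free x_opt.1 xv.
have [y y_opt] := lp_optimal_exists (set_fix_round_up_feasible b e_irr x_opt.1 xv).
have [yj|yj] := boolP (0 < y j < 1); last first.
  by exists y; split=> //; apply: unit_nonfrac_eq01 (y_opt.1.2.1 j) yj.
pose X := scale_frac 0 x; pose Y := scale_frac 0 y.
exists (squeeze X Y); split.
  exact: squeeze_optimal Nv (optimal_scale_frac0 x_opt) (optimal_scale_frac0 y_opt) (scale_frac0 xv).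
have [c xjc] : exists c : bool, x j = c%:R by case: xj => ->; [exists false | exists true].
have Xj : X j = c%:R by rewrite /X scale_frac_nonfrac xjc ?bool_nonfrac.
by rewrite (squeeze_bool Xj); [case: c {Xj xjc}; [right | left] | right; apply: scale_frac0].
Qed.
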